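(* Let $(A,E,\langle\!\langle-,-\rangle\!\rangle,\partial,[\![-,-]\!])$ be a double Courant--Dorfman algebra. Then for all $e,f,g\in E$, $$\langle\!\langle e,[\![f,g]\!]\rangle\!\rangle_L-\langle\!\langle f,\partial\langle\!\langle e,g\rangle\!\rangle\rangle\!\rangle_R-\langle\!\langle[\![e,f]\!],g\rangle\!\rangle_L+\langle\!\langle\partial\langle\!\langle e,f\rangle\!\rangle,g\rangle\!\rangle_L=0\quad\text{in }A^{\otimes3}.$$
   Context: All algebras are associative unital $\Bbbk$-algebras, $\Bbbk$ a field of characteristic zero, $\otimes=\otimes_\Bbbk$. Sweedler notation: $x=x'\otimes x''$ with summation suppressed; $(x'\otimes x'')^\sigma=x''\otimes x'$. Outer structure on $A\otimes A$, $E\otimes A$, $A\otimes E$: $a(x'\otimes x'')b=ax'\otimes x''b$; inner structure on $A\otimes A$: $a*(x'\otimes x'')*b=x'b\otimes ax''$. For $x=x'\otimes x''$ and $y$: $x\otimes_1y:=x'\otimes y\otimes x''$, $y\otimes_1x:=x'\otimes y\otimes x''$. $A$ is an algebra, $E$ an $A$-bimodule, $\partial\colon A\to E$ a derivation, acting on $A\otimes A$ by $\partial(x'\otimes x'')=\partial x'\otimes x''+x'\otimes\partial x''\in E\otimes A\oplus A\otimes E$. A pairing $\langle\!\langle-,-\rangle\!\rangle\colon E\otimes E\to A\otimes A$ is linear with $f\mapsto\langle\!\langle e,f\rangle\!\rangle$ a bimodule map to $(A\otimes A)_{\mathrm{out}}$ and $f\mapsto\langle\!\langle f,e\rangle\!\rangle$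 a bimodule map to $(A\otimes A)_{\mathrm{inn}}$; symmetric: $\langle\!\langle e,f\rangle\!\rangle=\langle\!\langle f,e\rangle\!\rangle^\sigma$. Extensions to $A^{\otimes3}$-valued maps (additive in the tensor argument): $\langle\!\langle e,f\otimes a\rangle\!\rangle_L=\langle\!\langle e,f\rangle\!\rangle\otimes a$, $\langle\!\langle e,a\otimes f\rangle\!\rangle_L=0$, $\langle\!\langle e,a\otimes f\rangle\!\rangle_R=a\otimes\langle\!\langle e,f\rangle\!\rangle$, $\langle\!\langle e,f\otimes a\rangle\!\rangle_R=0$, $\langle\!\langle e\otimes a,f\rangle\!\rangle_L=\langle\!\langle a\otimes e,f\rangle\!\rangle_R=\langle\!\langle e,f\rangle\!\rangle'\otimes a\otimes\langle\!\langle e,f\rangle\!\rangle''$, $\langle\!\langle a\otimes e,f\rangle\!\rangle_L=\langle\!\langle e\otimes a,f\rangle\!\rangle_R=0$. A double Courant--Dorfman bracket is a linear map $[\![-,-]\!]\colon T_AE\otimes T_AE\to T_AE\otimes T_AE$ of degree $-1$ ($T_AE$ the tensor algebra, $E$ in degree 1) with $[\![e,a]\!]=\langle\!\langle e,\partial a\rangle\!\rangle$, $[\![a,e]\!]=-\langle\!\langle\partial a,e\rangle\!\rangle$, $[\![a,b]\!]=0$; for $e,f\in E$, $[\![e,f]\!]=[\![e,f]\!]_l+[\![e,f]\!]_r\in E\otimes A\oplus A\otimes E$. Extensions: $[\![e,f\otimes a]\!]_L=[\![e,f]\!]\otimes a$, $[\![e,a\otimes f]\!]_L=\langle\!\langle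 e,\partial a\rangle\!\rangle\otimes f$, $[\![e,f\otimes a]\!]_R=f\otimes\langle\!\langle e,\partial a\rangle\!\rangle$, $[\![e,a\otimes f]\!]_R=a\otimes[\![e,f]\!]$, $[\![e\otimes a,f]\!]_L=[\![e,f]\!]\otimes_1a+\langle\!\langle e,f\rangle\!\rangle\otimes_1\partial a$, $[\![a\otimes e,f]\!]_L=-\langle\!\langle\partial a,f\rangle\!\rangle\otimes_1e$. A double Courant--Dorfman algebra is $(A,E,\langle\!\langle-,-\rangle\!\rangle,\partial,[\![-,-]\!])$ with symmetric pairing, derivation and double Courant--Dorfman bracket such that for all $a,b\in A$, $e,f,g\in E$: $\partial\langle\!\langle e,f\rangle\!\rangle=[\![e,f]\!]+[\![f,e]\!]^\sigma$; $[\![\partial a,e]\!]=0$; $\langle\!\langle\partial a,\partial b\rangle\!\rangle=0$; $[\![e,fa]\!]=[\![e,f]\!]a+f\langle\!\langle e,\partial a\rangle\!\rangle$; $[\![e,af]\!]=a[\![e,f]\!]+\langle\!\langle e,\partial a\rangle\!\rangle f$; $[\![e,[\![f,g]\!]]\!]_L=[\![f,[\![e,g]\!]]\!]_R+[\![[\![e,f]\!],g]\!]_L$; $\langle\!\langle e,\partial\langle\!\langle f,g\rangle\!\rangle\rangle\!\rangle_L=\langle\!\langle f,[\![e,g]\!]\rangle\!\rangle_R+\langle\!\langle[\![e,f]\!],g\rangle\!\rangle_L$. *)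

(* Tensor products over the field K are given abstractly by
   their universal property (record [tensor]). *)
From HB Require Import structures.
From mathcomp Require Import all_boot all_order all_algebra.
Set Implicit Arguments. Unset Strict Implicit. Unset Printing Implicit Defensive.
Import GRing.Theory.
Local Open Scope ring_scope.

Definition klinear (K : fieldType) (U W : lmodType K) (f : U -> W) : Prop :=
  forall (k : K) (x y : U), f (k *: x + y) = k *: f x + f y.

Definition kbilinear (K : fieldType) (U V W : lmodType K) (f : U -> V -> W) : Prop :=
  (forall u, klinear (f u)) /\ (forall v, klinear (fun u => f u v)).

Record tensor (K : fieldType) (U V : lmodType K) := Tensor {
  tcarrier :> lmodType K;
  tmul : U -> V -> tcarrier;
  tmul_bilinear : kbilinear tmul;
  tlift : forall W : lmodType K, (U -> V -> W) -> tcarrier -> W;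
  tlift_linear : forall (W : lmodType K) (f : U -> V -> W),
      kbilinear f -> klinear (tlift f);
  tlift_tmul : forall (W : lmodType K) (f : U -> V -> W),
      kbilinear f -> forall u v, tlift f (tmul u v) = f u v;
  tmul_span : forall t : tcarrier,
      exists s : seq (U * V), t = \sum_(p <- s) tmul p.1 p.2 }.

Record bimodule (K : fieldType) (A : algType K) (E : lmodType K) := Bimodule {
  lact : A -> E -> E;
  ract : E -> A -> E;
  lact_bilinear : kbilinear (lact : (A : lmodType K) -> E -> E);
  ract_bilinear : kbilinear (ract : E -> (A : lmodType K) -> E);
  lact1 : forall e, lact 1 e = e;
  lactM : forall a b e, lact (a * b) e = lact a (lact b e);
  ract1 : forall e, ract e 1 = e;
  ractM : forall a b e, ract e (a * b) = ract (ract e a) b;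
  lact_ract : forall a b e, lact a (ract e b) = ract (lact a e) b }.

Record tensors (K : fieldType) (A : algType K) (E : lmodType K) := Tensors {
  TAA : tensor (A : lmodType K) (A : lmodType K);
  TEA : tensor E (A : lmodType K);
  TAE : tensor (A : lmodType K) E;
  TAAA : tensor TAA (A : lmodType K);
  TEAA : tensor TEA (A : lmodType K);
  TAEA : tensor TAE (A : lmodType K);
  TAAE : tensor TAA E }.

Arguments tlift {K U V} _ {W} _ _.
Arguments tmul {K U V} _ _ _.
Arguments lact {K A E} _ _ _.
Arguments ract {K A E} _ _ _.

Section Ops.
Variables (K : fieldType) (A : algType K) (E : lmodType K).
Variables (B : bimodule A E) (T : tensors A E).

Local Notation AA := (tcarrier (TAA T)).
Local Notation EA := (tcarrier (TEA T)).
Local Notation AE := (tcarrier (TAE T)).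
Local Notation AAA := (tcarrier (TAAA T)).
Local Notation EAA := (tcarrier (TEAA T)).
Local Notation AEA := (tcarrier (TAEA T)).
Local Notation AAE := (tcarrier (TAAE T)).
Local Notation "x ** y" := (tmul _ x y) (at level 40, left associativity).
Local Notation lift := (tlift _).

Definition tAAA (a b c : A) : AAA := tmul (TAAA T) (tmul (TAA T) a b) c.
Definition tEAA (e : E) (b c : A) : EAA := tmul (TEAA T) (tmul (TEA T) e b) c.
Definition tAEA (a : A) (e : E) (c : A) : AEA := tmul (TAEA T) (tmul (TAE T) a e) c.
Definition tAAE (a b : A) (e : E) : AAE := tmul (TAAE T) (tmul (TAA T) a b) e.

Definition sigAA : AA -> AA := tlift (TAA T) (fun a b => tmul (TAA T) b a).
Definition sigEA : EA -> AE := tlift (TEA T) (fun e a => tmul (TAE T) a e).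
Definition sigAE : AE -> EA := tlift (TAE T) (fun a e => tmul (TEA T) e a).
Definition sig2 (X : EA * AE) : EA * AE := (sigAE X.2, sigEA X.1).

Definition outAA (a : A) (x : AA) (b : A) : AA :=
  tlift (TAA T) (fun x1 x2 => tmul (TAA T) (a * x1) (x2 * b)) x.
Definition innAA (a : A) (x : AA) (b : A) : AA :=
  tlift (TAA T) (fun x1 x2 => tmul (TAA T) (x1 * b) (a * x2)) x.

Definition lmul2 (a : A) (X : EA * AE) : EA * AE :=
  (tlift (TEA T) (fun e c => tmul (TEA T) (lact B a e) c) X.1,
   tlift (TAE T) (fun c e => tmul (TAE T) (a * c) e) X.2).
Definition rmul2 (X : EA * AE) (a : A) : EA * AE :=
  (tlift (TEA T) (fun e c => tmul (TEA T) e (c * a)) X.1,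
   tlift (TAE T) (fun c e => tmul (TAE T) c (ract B e a)) X.2).
Definition EmulAA (f : E) (x : AA) : EA :=
  tlift (TAA T) (fun x1 x2 => tmul (TEA T) (ract B f x1) x2) x.
Definition AAmulE (x : AA) (f : E) : AE :=
  tlift (TAA T) (fun x1 x2 => tmul (TAE T) x1 (lact B x2 f)) x.

Variable d : A -> E.
Variable pr : E -> E -> AA.
Variable br : E -> E -> EA * AE.

Definition d2 (x : AA) : EA * AE :=
  (tlift (TAA T) (fun x1 x2 => tmul (TEA T) (d x1) x2) x,
   tlift (TAA T) (fun x1 x2 => tmul (TAE T) x1 (d x2)) x).

(* <<e, X>>_L, <<e, X>>_R, <<X, f>>_L, <<X, f>>_R for X in E(x)A (+) A(x)E *)
Definition pairL2 (e : E) (X : EA * AE) : AAA :=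
  tlift (TEA T) (fun f a => tmul (TAAA T) (pr e f) a) X.1.
Definition pairR2 (e : E) (X : EA * AE) : AAA :=
  tlift (TAE T) (fun a f => tlift (TAA T) (fun x1 x2 => tAAA a x1 x2) (pr e f)) X.2.
Definition pairL1 (X : EA * AE) (f : E) : AAA :=
  tlift (TEA T) (fun e a => tlift (TAA T) (fun x1 x2 => tAAA x1 a x2) (pr e f)) X.1.
Definition pairR1 (X : EA * AE) (f : E) : AAA :=
  tlift (TAE T) (fun a e => tlift (TAA T) (fun x1 x2 => tAAA x1 a x2) (pr e f)) X.2.

(* degree-1 part of T_AE^{(x)3}: E(x)A(x)A (+) A(x)E(x)A (+) A(x)A(x)E *)
Definition triple := ((EAA * AEA) * AAE)%type.

Definition brL2 (e : E) (X : EA * AE) : triple :=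
  (tlift (TEA T) (fun f a => tmul (TEAA T) (br e f).1 a) X.1,
   tlift (TEA T) (fun f a => tmul (TAEA T) (br e f).2 a) X.1,
   tlift (TAE T) (fun a f => tmul (TAAE T) (pr e (d a)) f) X.2).
Definition brR2 (e : E) (X : EA * AE) : triple :=
  (tlift (TEA T) (fun f a =>
      tlift (TAA T) (fun x1 x2 => tEAA f x1 x2) (pr e (d a))) X.1,
   tlift (TAE T) (fun a f =>
      tlift (TEA T) (fun f' b => tAEA a f' b) (br e f).1) X.2,
   tlift (TAE T) (fun a f =>
      tlift (TAE T) (fun b f' => tAAE a b f') (br e f).2) X.2).
(* [[X, f]]_L, using  x (x)_1 y = x' (x) y (x) x'' *)
Definition brL1 (X : EA * AE) (g : E) : triple :=
  (tlift (TEA T) (fun e a =>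
      tlift (TEA T) (fun x1 x2 => tEAA x1 a x2) (br e g).1) X.1,
   tlift (TEA T) (fun e a =>
      tlift (TAA T) (fun x1 x2 => tAEA x1 (d a) x2) (pr e g)) X.1
   - tlift (TAE T) (fun a e =>
      tlift (TAA T) (fun x1 x2 => tAEA x1 e x2) (pr (d a) g)) X.2,
   tlift (TEA T) (fun e a =>
      tlift (TAE T) (fun x1 x2 => tAAE x1 a x2) (br e g).2) X.1).

End Ops.

(* Double Courant--Dorfman algebra (A, E, <<-,->>, d, [[-,-]]).
   The bracket [[e,f]] (e, f in E) is  br e f = ([[e,f]]_l, [[e,f]]_r). *)
Record is_DCD_algebra (K : fieldType) (A : algType K) (E : lmodType K)
    (B : bimodule A E) (T : tensors A E)
    (d : A -> E) (pr : E -> E -> tcarrier (TAA T))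
    (br : E -> E -> (tcarrier (TEA T) * tcarrier (TAE T))%type) : Prop := {
  d_linear : klinear (d : (A : lmodType K) -> E);
  d_leibniz : forall a b, d (a * b) = ract B (d a) b + lact B a (d b);
  pr_bilinear : kbilinear pr;
  pr_outer : forall e f a b, pr e (lact B a (ract B f b)) = outAA a (pr e f) b;
  pr_inner : forall e f a b, pr (lact B a (ract B f b)) e = innAA a (pr f e) b;
  pr_sym : forall e f, pr e f = sigAA (pr f e);
  br_bilinear : kbilinear br;
  ax_d_pr : forall e f, d2 d (pr e f) = br e f + sig2 (br f e);
  ax_br_d : forall a e, br (d a) e = 0;
  ax_pr_dd : forall a b, pr (d a) (d b) = 0;
  ax_br_r : forall e f a,
      br e (ract B f a) = rmul2 B (br e f) a + (EmulAA B f (pr e (d a)), 0);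
  ax_br_l : forall e f a,
      br e (lact B a f) = lmul2 B a (br e f) + (0, AAmulE B (pr e (d a)) f);
  ax_jacobi : forall e f g,
      brL2 d pr br e (br f g) = brR2 d pr br f (br e g) + brL1 d pr br (br e f) g;
  ax_pr_br : forall e f g,
      pairL2 pr e (d2 d (pr f g)) = pairR2 pr f (br e g) + pairL1 pr (br e f) g }.

From HB Require Import structures.
From mathcomp Require Import all_boot all_order all_algebra.
Set Implicit Arguments. Unset Strict Implicit. Unset Printing Implicit Defensive.
Import GRing.Theory.
Local Open Scope ring_scope.

(* The theorem follows from the axiom
     <<e, d<<f,g>>>>_L = <<f,[[e,g]]>>_R + <<[[e,f]],g>>_L
   used at (e,f,g) and at (g,e,f), together with d<<x,y>> = [[x,y]] + [[y,x]]^sigma.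
   The two instances are compared through the cyclic permutation
   a(x)b(x)c |-> b(x)c(x)a of A^(x)3: by symmetry of the pairing it sends
   <<g,X>>_L to <<X,g>>_L, <<e,X>>_R to <<e,X^sigma>>_L and <<X,f>>_L to
   <<f,X^sigma>>_R.  The resulting four terms cancel in pairs. *)

Section KLinear.
Variable K : fieldType.
Implicit Types U V W X : lmodType K.

Lemma klinearD U W (f : U -> W) : klinear f -> {morph f : x y / x + y}.
Proof. by move=> lf x y; have := lf 1 x y; rewrite !scale1r. Qed.

Lemma klinear0 U W (f : U -> W) : klinear f -> f 0 = 0.
Proof. by move=> lf; apply: (addrI (f 0)); rewrite -(klinearD lf) !addr0. Qed.

Lemma klinear_sum U W (f : U -> W) I (s : seq I) (F : I -> U) : klinear f ->
  f (\sum_(i <- s) F i) = \sum_(i <- s) f (F i).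
Proof. by move=> lf; apply: big_morph; [apply: klinearD | apply: klinear0]. Qed.

Lemma klinear_comp U V W (f : V -> W) (g : U -> V) :
  klinear f -> klinear g -> klinear (fun x => f (g x)).
Proof. by move=> lf lg k x y; rewrite lg lf. Qed.

Lemma tmul_linearl U V (t : tensor U V) v : klinear (fun u => tmul t u v).
Proof. exact: (proj2 (tmul_bilinear t)). Qed.

Lemma tmul_linearr U V (t : tensor U V) u : klinear (tmul t u).
Proof. exact: (proj1 (tmul_bilinear t)). Qed.

Lemma tensor_ext U V W (t : tensor U V) (F G : t -> W) : klinear F -> klinear G ->
  (forall u v, F (tmul t u v) = G (tmul t u v)) -> F =1 G.
Proof.
move=> lF lG eqFG x; have [s ->] := tmul_span x.
by rewrite !klinear_sum //; apply: eq_bigr => p _; apply: eqFG.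
Qed.

Lemma tlift_linear_param U V W X (t : tensor U V) (G : X -> U -> V -> W) :
  (forall x, kbilinear (G x)) -> (forall u v, klinear (fun x => G x u v)) ->
  forall y, klinear (fun x => tlift t (G x) y).
Proof.
move=> bG lG y k x x'; have [s ->] := tmul_span y.
rewrite !(klinear_sum _ _ (tlift_linear (bG _))) scaler_sumr -big_split.
by apply: eq_bigr => p _; rewrite !tlift_tmul // lG.
Qed.

Lemma tmul_flip_bilinear U V (t : tensor U V) : kbilinear (fun v u => tmul t u v).
Proof. by split=> ?; [apply: tmul_linearl | apply: tmul_linearr]. Qed.

End KLinear.

Section Cycle.
Variables (K : fieldType) (A : algType K) (E : lmodType K) (T : tensors A E).

Lemma tAAA_linear1 (b c : A) : klinear (fun a => tAAA T a b c).
Proof. exact: klinear_comp (tmul_linearl _ _) (tmul_linearl _ _). Qed.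

Lemma tAAA_linear2 (a c : A) : klinear (fun b => tAAA T a b c).
Proof. exact: klinear_comp (tmul_linearl _ _) (tmul_linearr _ _). Qed.

Lemma tAAA_linear3 (a b : A) : klinear (tAAA T a b).
Proof. exact: tmul_linearr. Qed.

Lemma tAAA_bilinear23 (a : A) : kbilinear (tAAA T a).
Proof. by split=> ?; [apply: tAAA_linear3 | apply: tAAA_linear2]. Qed.

Lemma tAAA_bilinear13 (b : A) : kbilinear (fun a c => tAAA T a b c).
Proof. by split=> ?; [apply: tAAA_linear3 | apply: tAAA_linear1]. Qed.

Lemma tAAA_bilinear31 (c : A) : kbilinear (fun a b => tAAA T b c a).
Proof. by split=> ?; [apply: tAAA_linear1 | apply: tAAA_linear3]. Qed.

Definition cycle3 : tcarrier (TAAA T) -> tcarrier (TAAA T) :=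
  tlift (TAAA T) (fun u c => tlift (TAA T) (fun a b => tAAA T b c a) u).

Lemma cycle3_bilinear :
  kbilinear (fun u c => tlift (TAA T) (fun a b : A => tAAA T b c a) u).
Proof.
split=> [u|c]; last exact: tlift_linear (tAAA_bilinear31 c).
apply: (tlift_linear_param (G := fun c a b => tAAA T b c a)) => [c|a b].
  exact: tAAA_bilinear31.
exact: tAAA_linear2.
Qed.

Lemma cycle3_linear : klinear cycle3.
Proof. exact: tlift_linear cycle3_bilinear. Qed.

Lemma cycle3_tAAA a b c : cycle3 (tAAA T a b c) = tAAA T b c a.
Proof.
rewrite /cycle3 /tAAA (tlift_tmul _ cycle3_bilinear).
by rewrite (tlift_tmul _ (tAAA_bilinear31 c)).
Qed.

End Cycle.

Arguments cycle3_linear {K A E T}.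

Section Pairing.
Variables (K : fieldType) (A : algType K) (E : lmodType K) (T : tensors A E).
Variable pr : E -> E -> tcarrier (TAA T).
Hypothesis pr_linearr : forall e, klinear (pr e).
Hypothesis pr_linearl : forall f, klinear (pr^~ f).
Hypothesis pr_sym : forall e f, pr e f = sigAA (pr f e).

Lemma pairL2_bilinear e : kbilinear (fun (f : E) (a : A) => tmul (TAAA T) (pr e f) a).
Proof.
split=> [f|a]; first exact: tmul_linearr.
exact: klinear_comp (tmul_linearl _ _) (pr_linearr e).
Qed.

Lemma pairR2_bilinear e : kbilinear (fun (a : A) (f : E) =>
  tlift (TAA T) (fun x1 x2 => tAAA T a x1 x2) (pr e f)).
Proof.
split=> [a|f].
  exact: klinear_comp (tlift_linear (tAAA_bilinear23 T a)) (pr_linearr e).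
apply: (tlift_linear_param (G := tAAA T)) => [a|b c]; first exact: tAAA_bilinear23.
exact: tAAA_linear1.
Qed.

Lemma pairL1_bilinear f : kbilinear (fun (e : E) (a : A) =>
  tlift (TAA T) (fun x1 x2 => tAAA T x1 a x2) (pr e f)).
Proof.
split=> [e|a]; last first.
  exact: klinear_comp (tlift_linear (tAAA_bilinear13 T a)) (pr_linearl f).
apply: (tlift_linear_param (G := fun b a c => tAAA T a b c)) => [b|a c].
  exact: tAAA_bilinear13.
exact: tAAA_linear2.
Qed.

Lemma pairL2D e : {morph pairL2 pr e : X Y / X + Y}.
Proof.
by move=> X Y; rewrite /pairL2 /= (klinearD (tlift_linear (pairL2_bilinear e))).
Qed.

Lemma pairR2D e : {morph pairR2 pr e : X Y / X + Y}.
Proof.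
by move=> X Y; rewrite /pairR2 /= (klinearD (tlift_linear (pairR2_bilinear e))).
Qed.

Lemma cycle3_pairL2 g X : cycle3 (pairL2 pr g X) = pairL1 pr X g.
Proof.
rewrite /pairL2 /pairL1; move: (X.1); apply: tensor_ext.
- exact: klinear_comp cycle3_linear (tlift_linear (pairL2_bilinear g)).
- exact: tlift_linear (pairL1_bilinear g).
move=> h a; rewrite !tlift_tmul; [|exact: pairL1_bilinear|exact: pairL2_bilinear].
rewrite pr_sym; move: (pr h g); apply: tensor_ext.
- exact: klinear_comp cycle3_linear
    (klinear_comp (tmul_linearl _ _) (tlift_linear (tmul_flip_bilinear _))).
- exact: tlift_linear (tAAA_bilinear13 T a).
move=> x1 x2; rewrite /sigAA !tlift_tmul;
  [|exact: tAAA_bilinear13|exact: tmul_flip_bilinear].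
by rewrite -/(tAAA T x2 x1 a) cycle3_tAAA.
Qed.

Lemma cycle3_pairR2 e X : cycle3 (pairR2 pr e X) = pairL2 pr e (sig2 X).
Proof.
rewrite /pairR2 /pairL2 /=; move: (X.2); apply: tensor_ext.
- exact: klinear_comp cycle3_linear (tlift_linear (pairR2_bilinear e)).
- exact: klinear_comp (tlift_linear (pairL2_bilinear e))
    (tlift_linear (tmul_flip_bilinear _)).
move=> a f; rewrite /sigAE !tlift_tmul;
  [|exact: pairL2_bilinear|exact: tmul_flip_bilinear|exact: pairR2_bilinear].
move: (pr e f); apply: tensor_ext.
- exact: klinear_comp cycle3_linear (tlift_linear (tAAA_bilinear23 T a)).
- exact: tmul_linearl.
by move=> x1 x2; rewrite !tlift_tmul ?cycle3_tAAA //; apply: tAAA_bilinear23.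
Qed.

Lemma cycle3_pairL1 f X : cycle3 (pairL1 pr X f) = pairR2 pr f (sig2 X).
Proof.
rewrite /pairR2 /pairL1 /=; move: (X.1); apply: tensor_ext.
- exact: klinear_comp cycle3_linear (tlift_linear (pairL1_bilinear f)).
- exact: klinear_comp (tlift_linear (pairR2_bilinear f))
    (tlift_linear (tmul_flip_bilinear _)).
move=> h a; rewrite /sigEA !tlift_tmul;
  [|exact: pairR2_bilinear|exact: tmul_flip_bilinear|exact: pairL1_bilinear].
rewrite (pr_sym f h); move: (pr h f); apply: tensor_ext.
- exact: klinear_comp cycle3_linear (tlift_linear (tAAA_bilinear13 T a)).
- exact: klinear_comp (tlift_linear (tAAA_bilinear23 T a))
    (tlift_linear (tmul_flip_bilinear _)).
move=> x1 x2; rewrite /sigAA !tlift_tmul;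
  [|exact: tAAA_bilinear23|exact: tmul_flip_bilinear|exact: tAAA_bilinear13].
by rewrite cycle3_tAAA.
Qed.

End Pairing.

Section DoubleCourantDorfman.
Variables (K : fieldType) (A : algType K) (E : lmodType K).
Variables (B : bimodule A E) (T : tensors A E) (d : A -> E).
Variable pr : E -> E -> tcarrier (TAA T).
Variable br : E -> E -> (tcarrier (TEA T) * tcarrier (TAE T))%type.
Hypothesis HD : is_DCD_algebra B d pr br.

Let pr_linearr := proj1 (pr_bilinear HD).
Let pr_linearl := proj2 (pr_bilinear HD).

Lemma pairL2_br e f g : pairL2 pr e (br f g)
  = pairR2 pr f (br e g) + pairL1 pr (br e f) g - pairL2 pr e (sig2 (br g f)).
Proof. by rewrite -(ax_pr_br HD) (ax_d_pr HD) (pairL2D pr_linearr) addrK. Qed.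

Lemma pairR2_d2_pr e f g : pairR2 pr f (d2 d (pr e g))
  = pairR2 pr f (br e g) + pairR2 pr f (sig2 (br g e)).
Proof. by rewrite (ax_d_pr HD) (pairR2D pr_linearr). Qed.

Lemma pairL1_d2_pr e f g : pairL1 pr (d2 d (pr e f)) g
  = pairL2 pr e (sig2 (br g f)) + pairR2 pr f (sig2 (br g e)).
Proof.
have prS := pr_sym HD.
rewrite -(cycle3_pairL2 pr_linearr pr_linearl prS) (ax_pr_br HD).
rewrite (klinearD cycle3_linear) (cycle3_pairR2 pr_linearr).
by rewrite (cycle3_pairL1 pr_linearr pr_linearl prS).
Qed.

End DoubleCourantDorfman.

Theorem lemmaA1 (K : fieldType) (charK0 : [pchar K] =i pred0)
    (A : algType K) (E : lmodType K) (B : bimodule A E) (T : tensors A E)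
    (d : A -> E) (pr : E -> E -> tcarrier (TAA T))
    (br : E -> E -> (tcarrier (TEA T) * tcarrier (TAE T))%type)
    (HD : is_DCD_algebra B d pr br) (e f g : E) :
  pairL2 pr e (br f g) - pairR2 pr f (d2 d (pr e g))
    - pairL1 pr (br e f) g + pairL1 pr (d2 d (pr e f)) g = 0.
Proof.
rewrite (pairL2_br HD) (pairR2_d2_pr HD) (pairL1_d2_pr HD).
set P := pairR2 pr f (br e g); set Q := pairR2 pr f (sig2 (br g e)).
set R := pairL1 pr (br e f) g; set M := pairL2 pr e (sig2 (br g f)).
rewrite [P + R]addrC [R + P - M]addrAC addrKA -[R - M - Q]addrA -opprD.
by rewrite addrAC subrK subrr.
Qed.
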